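(* Let $k\ge 1$ and let $\mathbf H_k=(h_{i,j})_{1\le i,j\le k}$ be a complex lower Hessenberg matrix, i.e. $h_{i,j}=0$ whenever $j-i>1$. Put $c_{i,j}=h_{i,j}$ if $j\neq i+1$ and $c_{i,i+1}=-h_{i,i+1}$. For $m\in\{0,1,\dots,2^{k-1}-1\}$ and $1\le j\le k$ let $\sigma_{k,j}(m)=j-\zeta_{k,j}(\tau_k(m))$, where $\tau_k$ and $\zeta_{k,j}$ are as defined in the context. Then $$\det(\mathbf H_k)=\sum_{m=0}^{2^{k-1}-1}\ \prod_{j=1}^{k} c_{j,\sigma_{k,j}(m)} .$$
   Context: $\mathfrak R_k$ denotes the set of arrays $r=(r_1,\dots,r_k)$ with $r_i\in\{0,1\}$ for $1\le i\le k-1$ and $r_k=1$. For $m\in\{0,\dots,2^{k-1}-1\}$, $\tau_k(m)=(\lfloor m/2^{k-2}\rfloor \bmod 2,\ \lfloor m/2^{k-3}\rfloor \bmod 2,\dots,\lfloor m/2^{0}\rfloor \bmod 2,\ 1)\in\mathfrak R_k$ (for $k=1$, $\tau_1(0)=(1)$). For $r\in\mathfrak R_k$ and $1\le i\le k$: $\zeta_{k,i}(r)=-1$ if $r_i=0$; if $r_i=1$ and there is an index $l<i$ with $r_l=1$, then $\zeta_{k,i}(r)=i-l-1$ where $l$ is the largest such index (i.e. $\zeta_{k,i}(r)$ is the number of consecutive zeros immediately preceding $r_i$); if $r_i=1$ and $r_l=0$ for all $l<i$, then $\zeta_{k,i}(r)=i-1$. Thus $\sigma_{k,j}(m)=j+1$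 exactly when the $j$-th component of $\tau_k(m)$ is $0$, in which case the factor is $c_{j,j+1}=-h_{j,j+1}$. *)

From HB Require Import structures.
From mathcomp Require Import all_boot all_order all_algebra.
From mathcomp Require Import reals complex.
Set Implicit Arguments. Unset Strict Implicit. Unset Printing Implicit Defensive.
Import Order.TTheory GRing.Theory Num.Theory.
Local Open Scope ring_scope.

(* Arrays r = (r_1,...,r_k) are represented 1-based as functions nat -> bool
   (true = 1, false = 0); only indices 1..k are meaningful. *)

Definition tau (k m : nat) : nat -> bool :=
  fun i => if i == k then true else odd (m %/ 2 ^ (k - 1 - i)).

Definition zeta (k i : nat) (r : nat -> bool) : int :=
  if ~~ r i then -1
  else if [exists l : 'I_i, (0 < (l : nat))%N && r l]
       then ((i - (\max_(l < i | (0 < (l : nat))%N && r l) (l : nat)) - 1)%N)%:Z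
       else (i - 1)%N%:Z.

Definition sigma (k j m : nat) : int := j%:Z - zeta k j (tau k m).

(* 1-based entry h_{i,j} of a k x k matrix (0 outside 1..k) *)
Definition hent (T : nmodType) (k : nat) (H : 'M[T]_k) (i j : nat) : T :=
  match k as n return 'M[T]_n -> T with
  | 0 => fun _ => 0
  | n.+1 => fun H' => if ((0 < i <= n.+1) && (0 < j <= n.+1))%N
                      then H' (inord i.-1) (inord j.-1) else 0
  end H.

(* c_{i,j} = h_{i,j} if j <> i+1, and c_{i,i+1} = - h_{i,i+1};
   the second index is an integer (sigma values are ints). *)
Definition cent (T : zmodType) (k : nat) (H : 'M[T]_k) (i : nat) (j : int) : T :=
  match j with
  | Posz jn => if jn == i.+1 then - hent H i jn else hent H i jn
  | Negz _ => 0
  end.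

Definition lower_hessenberg (T : nmodType) (k : nat) (H : 'M[T]_k) : Prop :=
  forall i j : 'I_k, (i.+1 < j)%N -> H i j = 0.

From HB Require Import structures.
From mathcomp Require Import all_boot all_order all_algebra.
From mathcomp Require Import reals complex.
From mathcomp Require Import zify.
Import Order.TTheory GRing.Theory Num.Theory.
Set Implicit Arguments. Unset Strict Implicit. Unset Printing Implicit Defensive.
Local Open Scope ring_scope.

(* Let D_p(u) be the determinant of the leading (p+1)-block of a lower
   Hessenberg matrix with its last row replaced by u.  Expanding along the last
   column, where only two entries survive, gives
     D_{p+1}(u) = u_{p+2} D_p(c_{p+1,.}) - h_{p+1,p+2} D_p(u).
   The sum over m < 2^p obeys the same recurrence: the (p+1)-st component of
   tau_{p+2}(m) is the lowest bit of m and the earlier ones are those of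
   tau_{p+1}(m/2).  For odd m the last factor is u_{p+2} and the others form the
   term of m/2 with last row c_{p+1,.}; for even m the (p+1)-st factor is
   c_{p+1,p+2} and the others form the term of m/2. *)

Definition last_one_before (i : nat) (r : nat -> bool) : nat :=
  (\max_(l < i | (0 < (l : nat))%N && r l) (l : nat))%N.

Lemma last_one_before_le i r : (last_one_before i r <= i.-1)%N.
Proof.
by apply/bigmax_leqP => l _; rewrite -ltnS (leq_trans (ltn_ord l)) ?leqSpred.
Qed.

Lemma last_one_beforeS i r :
  last_one_before i.+1 r = if (0 < i)%N && r i then i else last_one_before i r.
Proof.
rewrite /last_one_before big_mkcond big_ord_recr /= -big_mkcond /=.
case: ifP => _; last by rewrite maxn0.
by apply/maxn_idPr; rewrite (leq_trans (last_one_before_le i r)) ?leq_pred.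
Qed.

Lemma eq_last_one_before i r r' : {in [pred l | 0 < l < i]%N, r =1 r'} ->
  last_one_before i r = last_one_before i r'.
Proof.
move=> rr'; apply: eq_bigl => l; case: (posnP l) => [->|l_gt0] //=.
by rewrite rr' // inE l_gt0 /=.
Qed.

Lemma sigmaE k j m : (0 < j)%N ->
  sigma k j m = (if tau k m j then (last_one_before j (tau k m)).+1 else j.+1)%:Z.
Proof.
move=> j_gt0; rewrite /sigma /zeta; case: (tau k m j) => /=; last first.
  by rewrite opprK -addn1 PoszD.
have sub_sub n : (n < j)%N -> j%:Z - (j - n.+1)%N%:Z = n.+1.
  by move=> n_lt_j; rewrite -subzn // opprB addrC subrK.
have := last_one_before_le j (tau k m); rewrite /last_one_before.
case: ifP => [_ L_le|/negbT no_one _].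
  by rewrite -subnDA addn1 sub_sub // (leq_ltn_trans L_le) // prednK.
rewrite big1 => [|l l_one]; first by rewrite sub_sub.
by case/negP: no_one; apply/existsP; exists l.
Qed.

Lemma eq_sigma k k' j m m' : (0 < j)%N ->
  {in [pred l | 0 < l <= j]%N, tau k m =1 tau k' m'} ->
  sigma k j m = sigma k' j m'.
Proof.
move=> j_gt0 tau_eq; rewrite !sigmaE // tau_eq ?inE ?j_gt0 ?leqnn //.
rewrite (@eq_last_one_before j (tau k m) (tau k' m')) // => l.
by rewrite !inE => /andP[l_gt0 l_lt_j]; rewrite tau_eq // inE l_gt0 ltnW.
Qed.

Lemma tau_last k m : tau k m k.
Proof. by rewrite /tau eqxx. Qed.

Lemma tau_penult p m : tau p.+2 m p.+1 = odd m.
Proof. by rewrite /tau eqSS ltn_eqF // subn1 subnn divn1. Qed.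

Lemma tau_half p m j : (j <= p)%N -> tau p.+2 m j = tau p.+1 m./2 j.
Proof.
move=> j_le_p; rewrite /tau !ltn_eqF ?ltnS ?leqW //.
by rewrite !subn1 /= subSn // expnS divnMA divn2.
Qed.

Lemma sigma_half p j m : (0 < j <= p)%N -> sigma p.+2 j m = sigma p.+1 j m./2.
Proof.
case/andP=> j_gt0 j_le_p; apply: (eq_sigma j_gt0) => l /andP[_ l_le_j].
exact/tau_half/(leq_trans l_le_j).
Qed.

Lemma sigma_penult p m :
  sigma p.+2 p.+1 m = if odd m then sigma p.+1 p.+1 m./2 else p.+2%:Z.
Proof.
case: ifP => m_odd; last by rewrite sigmaE // tau_penult m_odd.
apply: (eq_sigma (ltn0Sn p)) => l /andP[l_gt0]; rewrite leq_eqVlt ltnS.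
by case/orP=> [/eqP->|l_le_p]; rewrite ?tau_penult ?tau_last ?tau_half.
Qed.

Lemma sigma_last p m :
  sigma p.+2 p.+2 m = if odd m then p.+2%:Z else sigma p.+1 p.+1 m./2.
Proof.
rewrite !sigmaE // !tau_last last_one_beforeS /= tau_penult.
case: ifP => // _; congr (Posz _.+1); apply: eq_last_one_before => l.
by rewrite inE => /andP[_ l_le_p]; rewrite tau_half.
Qed.

Lemma sum_ord_double (V : nmodType) (F : nat -> V) n :
  \sum_(m < n.*2) F m = \sum_(q < n) (F q.*2 + F q.*2.+1).
Proof.
rewrite -(big_mkord xpredT F) -(big_mkord xpredT (fun q => F q.*2 + F q.*2.+1)).
elim: n => [|n IHn]; first by rewrite !big_geq.
by rewrite doubleS !big_nat_recr //= IHn addrA.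
Qed.

Section LowerHessenberg.

Variables (T : comPzRingType) (k : nat) (H : 'M[T]_k).

Definition hessenberg_term p (v : int -> T) (m : nat) : T :=
  (\prod_(1 <= j < p.+1) cent H j (sigma p.+1 j m)) * v (sigma p.+1 p.+1 m).

Definition hessenberg_sum p (v : int -> T) : T :=
  \sum_(m < 2 ^ p) hessenberg_term p v m.

Lemma prod_cent_sigma_half p m :
  \prod_(1 <= j < p.+1) cent H j (sigma p.+2 j m) =
  \prod_(1 <= j < p.+1) cent H j (sigma p.+1 j m./2).
Proof. by apply: eq_big_nat => j j_range; rewrite sigma_half. Qed.

Lemma hessenberg_sumS p v :
  hessenberg_sum p.+1 v =
  v p.+2%:Z * hessenberg_sum p (cent H p.+1)
  - hent H p.+1 p.+2 * hessenberg_sum p v.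
Proof.
rewrite /hessenberg_sum expnS mul2n sum_ord_double !mulr_sumr -sumrB.
apply: eq_bigr => q _; rewrite /hessenberg_term addrC !(big_nat_recr p.+1) //.
rewrite !prod_cent_sigma_half !sigma_penult !sigma_last /= odd_double.
rewrite uphalf_double doubleK /= eqxx mulrC.
by rewrite mulrN mulNr [hent _ _ _ * _]mulrCA !mulrA.
Qed.

Definition block_lastrow p (u : int -> T) : 'M[T]_p.+1 :=
  \matrix_(i, j) if (i < p)%N then hent H i.+1 j.+1 else u j.+1%:Z.

Lemma cent_hent i j : j != i.+1 -> cent H i j%:Z = hent H i j.
Proof. by move=> j_neq; rewrite /cent ifN. Qed.

Lemma block_lastrow_minor_last p u :
  row' ord_max (col' ord_max (block_lastrow p.+1 u)) =
  block_lastrow p (cent H p.+1).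
Proof.
apply/matrixP => i j; rewrite !mxE !lift_max /= ltn_ord.
case: ltnP => [//|p_le_i]; rewrite eqSS ltn_eqF //.
by have /eqP-> : (i == p :> nat) by rewrite eqn_leq -ltnS ltn_ord.
Qed.

Lemma block_lastrow_minor_penult p u :
  row' (widen_ord (leqnSn p.+1) ord_max) (col' ord_max (block_lastrow p.+1 u)) =
  block_lastrow p u.
Proof.
apply/matrixP => i j; rewrite !mxE lift_max /= /bump.
case: (ltnP i p) => [i_lt_p | p_le_i]; first by rewrite add0n ltnS ltnW.
by rewrite add1n ltnS ltnNge p_le_i /=.
Qed.

Hypothesis hH : lower_hessenberg H.

Lemma hent_hessenberg i j : (i.+1 < j)%N -> hent H i j = 0.
Proof.
case: k H hH => // n H' hH' ij /=.
case: ifP => // /andP[/andP[i_gt0 i_le] /andP[j_gt0 j_le]].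
by apply: hH'; rewrite !inordK; lia.
Qed.

Lemma det_block_lastrowS p v :
  \det (block_lastrow p.+1 v) =
  v p.+2%:Z * \det (block_lastrow p (cent H p.+1))
  - hent H p.+1 p.+2 * \det (block_lastrow p v).
Proof.
rewrite (expand_det_col _ ord_max) !big_ord_recr /=.
rewrite big1 ?add0r => [|i _]; last first.
  by rewrite mxE /= ltnS ltnW // hent_hessenberg ?mul0r // !ltnS.
rewrite /cofactor (block_lastrow_minor_last p v) (block_lastrow_minor_penult p v).
rewrite !mxE /= ltnn ltnSn.
have sign_even n : (-1) ^+ (n + n) = 1 :> T by rewrite -signr_odd addnn odd_double.
rewrite addnS exprS !sign_even mulr1 mulN1r mul1r.
by rewrite addrC mulrN.
Qed.

Lemma det_block_lastrow p v : \det (block_lastrow p v) = hessenberg_sum p v.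
Proof.
elim: p v => [|p IHp] v; last by rewrite det_block_lastrowS hessenberg_sumS !IHp.
rewrite det_mx11 mxE /hessenberg_sum big_ord1 /hessenberg_term big_geq // mul1r.
by rewrite sigmaE // tau_last last_one_beforeS /last_one_before big_ord0.
Qed.

End LowerHessenberg.

Lemma block_lastrow_cent (T : comPzRingType) p (H : 'M[T]_p.+1) :
  block_lastrow H p (cent H p.+1) = H.
Proof.
apply/matrixP => i j; rewrite mxE /= !ltn_ord ltnSn eqSS ltn_eqF //= !inord_val.
case: ltnP => // p_le_i; congr (H _ _); apply: val_inj.
by rewrite /= inordK //; apply/eqP; rewrite eqn_leq p_le_i -ltnS ltn_ord.
Qed.

Theorem theorem1 (R : realType) (k : nat) (hk : (1 <= k)%N)
  (H : 'M[R[i]]_k) (hH : lower_hessenberg H) :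
  \det H = \sum_(m < 2 ^ (k - 1)) \prod_(1 <= j < k.+1) cent H j (sigma k j m).
Proof.
case: k hk H hH => // p _ H hH; rewrite subn1 /=.
rewrite -[in LHS](block_lastrow_cent H) det_block_lastrow //.
by apply: eq_bigr => m _; rewrite big_nat_recr.
Qed.
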